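(* Let $T^\sigma=(T,\sigma)$ be a signed tree. Then $\dim(T)-\mathrm{ext}(T)\le \dim(T^\sigma)\le \dim(T)$; equivalently, $\mathrm{mdd}(T^\sigma)\le \mathrm{ext}(T)$.
   Context: A signed graph $\Sigma=(G,\sigma)$ consists of a finite simple connected graph $G=(V,E)$ and a signature $\sigma:E\to\{+1,-1\}$. In a signed tree every pair of vertices $u,v$ is joined by a unique path $P(u,v)$, and the signed distance is $d_\Sigma(u,v)=\sigma(P(u,v))\,d(u,v)$, where $d$ is the usual distance and $\sigma(P)$ is the product of edge signs of $P$. For an ordered subset $W=(w_1,\dots,w_k)$ of vertices, $r_\Sigma(v|W)=(d_\Sigma(v,w_1),\dots,d_\Sigma(v,w_k))$; $W$ is a resolving set if distinct vertices have distinct representations; $\dim(T^\sigma)$ is the minimum size of a resolving set, and $\dim(T)$ is defined analogously for the unsigned tree using $d$. The metric dimensional difference is $\mathrm{mdd}(T^\sigma)=\dim(T)-\dim(T^\sigma)$. Tree terminology: a leaf is a vertex of degree $1$; a major vertex is a vertex of degree at least $3$; a leaf $u$ is a terminal vertex of a major vertex $v$ if $d(u,v)<d(u,w)$ for every other major vertex $w$; an exterior major vertex is a major vertex having at least one terminal vertex; $\mathrm{ext}(T)$ is the number of exterior major vertices of $T$. *)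

From Stdlib Require Import ClassicalEpsilon.
From mathcomp Require Import all_boot all_order all_algebra.
Set Implicit Arguments. Unset Strict Implicit. Unset Printing Implicit Defensive.
Import GRing.Theory Num.Theory.

Section SignedTrees.
Variable T : finType.
Variable e : rel T.

Definition simple_graph := symmetric e /\ irreflexive e.

Definition connected_graph := forall x y : T, connect e x y.

Definition is_cycle (x : T) (s : seq T) : bool :=
  [&& uniq (x :: s), 2 <= size s, path e x s & e (last x s) x].

Definition acyclic := forall x s, ~~ is_cycle x s.

Definition is_tree := [/\ simple_graph, connected_graph & acyclic].

Definition is_uv_path (u v : T) (s : seq T) : Prop :=
  [&& uniq (u :: s), path e u s & last u s == v].

(* the path P(u,v) (unique when e is a tree), chosen by epsilon;
   it is given as the list of vertices after u *)
Definition tpath (u v : T) : seq T :=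
  epsilon (inhabits [::]) (is_uv_path u v).

Definition tdist (u v : T) : nat := size (tpath u v).

Definition udist (u v : T) : int := (tdist u v)%:Z.

Variable neg : T -> T -> bool.  (* signature: neg x y = true iff sigma(xy) = -1 *)

Definition signature := forall x y, e x y -> neg x y = neg y x.

Definition esign (x y : T) : int := if neg x y then (-1)%R else 1%R.

Definition path_sign (u : T) (s : seq T) : int :=
  (\prod_(p <- zip (u :: s) s) esign p.1 p.2)%R.

Definition sdist (u v : T) : int := (path_sign u (tpath u v) * (tdist u v)%:Z)%R.

End SignedTrees.

Section MetricDim.
Variable T : finType.

Definition resolving (d : T -> T -> int) (W : {set T}) : bool :=
  [forall u, forall v, [forall w in W, d u w == d v w] ==> (u == v)].

Definition mdim (d : T -> T -> int) : nat :=
  \big[minn/#|T|]_(W : {set T} | resolving d W) #|W|.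

Variable e : rel T.

Definition deg (v : T) : nat := #|[set w | e v w]|.
Definition leaf (v : T) : bool := deg v == 1.
Definition major (v : T) : bool := 3 <= deg v.

Definition terminal (u v : T) : bool :=
  [&& leaf u, major v &
      [forall w, (major w && (w != v)) ==> (tdist e u v < tdist e u w)]].

Definition exterior_major (v : T) : bool := major v && [exists u, terminal u v].

Definition ext : nat := #|[set v | exterior_major v]|.

End MetricDim.

From Stdlib Require Import ClassicalEpsilon.
From mathcomp Require Import all_boot all_algebra zify.
Set Implicit Arguments. Unset Strict Implicit. Unset Printing Implicit Defensive.

(* The upper bound holds because |d_Sigma(u,v)| = d(u,v), so every resolving
   set of T resolves T^sigma.  For the lower bound fix a resolving set W of
   T^sigma.  For a vertex m let [toward m w] be the neighbour of m on P(m,w);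
   the branch at m through a neighbour a is W-free if no w in W is reached
   from m through a.  The proof rests on three facts:
   (1) a nonempty W resolves T as soon as no vertex has two W-free branches:
       two equidistant vertices are walked toward each other until they
       become two neighbours of a common vertex;
   (2) two W-free branches at one vertex whose edges have the same sign do
       not separate their ends in T^sigma, so a vertex has at most two of them;
   (3) a major vertex with two W-free branches without major vertices (legs)
       is an exterior major vertex.
   Adding one leg neighbour of each vertex as in (3) yields W' with
   |W'| <= |W| + ext(T), and a farthest-major-vertex argument combined with
   (1) and (2) shows that W' resolves T.  Trees without major vertices are
   paths, resolved by one end vertex. *)

Lemma last_rev_belast (T : Type) (y : T) t : last (last y t) (rev (belast y t)) = y.
Proof. by case: t => // z t'; rewrite /= rev_cons last_rcons. Qed.

Section Tree.
Variable T : finType.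
Variable e : rel T.
Hypothesis eS : symmetric e.
Hypothesis eirr : irreflexive e.
Hypothesis econn : connected_graph e.
Hypothesis eacyc : acyclic e.

Local Notation tp := (tpath e).
Local Notation td := (tdist e).

Lemma neq_of_edge x y : e x y -> x != y.
Proof. by apply: contraTneq => ->; rewrite eirr. Qed.

Lemma rev_uv_path u v s : is_uv_path e u v s -> is_uv_path e v u (rev (belast u s)).
Proof.
case/and3P => us ps /eqP ls; apply/and3P; split.
- by rewrite -ls -rev_rcons -lastI rev_uniq.
- by rewrite -ls rev_path (@eq_path _ _ e) // => a b /=; rewrite eS.
- by rewrite -ls last_rev_belast.
Qed.

Lemma exists_uv_path u v : exists s, is_uv_path e u v s.
Proof.
have /connectP [p pp ->] := econn u v.
case: (shortenP pp) => p' pp' up' _; exists p'.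
by rewrite /is_uv_path up' pp' eqxx.
Qed.

Lemma tpath_spec u v : is_uv_path e u v (tp u v).
Proof. by apply: epsilon_spec; apply: exists_uv_path. Qed.

(* Two u-v paths leaving u through different neighbours x, y close a cycle
   through u, x and y. *)
Lemma uv_paths_same_start u v x y s t :
  is_uv_path e u v (x :: s) -> is_uv_path e u v (y :: t) -> x = y.
Proof.
move=> /and3P [us /= /andP [eux pxs] /eqP ls] /and3P [ut /= /andP [euy pyt] /eqP lt].
apply/eqP; apply: contraT => nxy.
set q := s ++ rev (belast y t).
have pq : path e x q.
  rewrite cat_path pxs /= ls -lt rev_path.
  by rewrite (@eq_path _ _ e) // => a b /=; rewrite eS.
have lq : last x q = y by rewrite last_cat ls -lt last_rev_belast.
have uq : u \notin q.
  rewrite mem_cat negb_or mem_rev; apply/andP; split.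
    by move: us => /= /andP [] /norP [].
  by apply/negP => /mem_belast uyt; move: ut => /= /andP [/negP []].
move: lq; case: (shortenP pq) => q' pq' uq' sq lq'.
have ux : u != x by move: us => /= /andP [] /norP [].
have uq'' : u \notin q' by apply/negP => /sq; apply/negP.
case/negP: (eacyc u (x :: q')); apply/and4P; split.
- by rewrite /= in_cons negb_or ux uq''.
- by case: q' lq' {pq' uq' sq uq''} => [/= xy|]; [rewrite xy eqxx in nxy|].
- by rewrite /= eux pq'.
- by rewrite /= lq' eS.
Qed.

Lemma uv_path_unique u v s t : is_uv_path e u v s -> is_uv_path e u v t -> s = t.
Proof.
elim: s u t => [|x s IH] u [|y t] //.
- move=> /and3P [_ _ /eqP /= uv] /and3P [ut _ /eqP lt].
  by move: ut => /= /andP [/negP []]; rewrite uv -lt /= mem_last.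
- move=> /and3P [ut _ /eqP lt] /and3P [_ _ /eqP /= uv].
  by move: ut => /= /andP [/negP []]; rewrite uv -lt /= mem_last.
move=> Ps Pt; have exy := uv_paths_same_start Ps Pt; subst y.
move: Ps Pt => /and3P [/andP [_ us] /andP [_ ps] ls] /and3P [/andP [_ ut] /andP [_ pt] lt].
by congr (_ :: _); apply: (IH x); apply/and3P.
Qed.

Lemma tpath_unique u v s : is_uv_path e u v s -> tp u v = s.
Proof. exact: uv_path_unique (tpath_spec u v). Qed.

Lemma tpath_refl u : tp u u = [::].
Proof. by apply: tpath_unique; rewrite /is_uv_path /= eqxx. Qed.

Lemma tpath_edge u v : e u v -> tp u v = [:: v].
Proof.
move=> euv; apply: tpath_unique.
by rewrite /is_uv_path /= euv eqxx !andbT in_cons orbF neq_of_edge.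
Qed.

Lemma tpath_last u v : last u (tp u v) = v.
Proof. by case/and3P: (tpath_spec u v) => _ _ /eqP. Qed.

Lemma tpath_cons u w y s : tp u w = y :: s -> e u y /\ tp y w = s.
Proof.
move=> H; case/and3P: (tpath_spec u w); rewrite H /= => /andP [_ us] /andP [euy ps] /eqP ls.
by split => //; apply: tpath_unique; rewrite /is_uv_path /= us ps ls eqxx.
Qed.

(* P(v,u) is the reverse of P(u,v), so the distance is symmetric. *)
Lemma tdist_sym u v : td v u = td u v.
Proof.
by rewrite /tdist (tpath_unique (rev_uv_path (tpath_spec u v))) size_rev size_belast.
Qed.

Lemma tpath_adjacent x y w : e x y -> tp x w = y :: tp y w \/ tp y w = x :: tp x w.
Proof.
move=> exy; case H: (tp x w) => [|z s].
  right; apply: tpath_unique; have := tpath_last x w; rewrite H /= => xw.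
  rewrite /is_uv_path /= in_cons orbF eS exy xw eqxx !andbT.
  by rewrite -xw eq_sym neq_of_edge.
case: (eqVneq z y) => [zy|nzy].
  by left; subst z; case: (tpath_cons H) => _ ->.
right; apply: tpath_unique; rewrite -H.
case/and3P: (tpath_spec x w) => us ps ls.
rewrite /is_uv_path /= eS exy ps ls !andbT; move: (us) => /= /andP [-> ->].
rewrite !andbT in_cons negb_or eq_sym neq_of_edge //=.
apply/negP => ys; rewrite H in ys us ps.
have ys' : y \in s by move: ys; rewrite in_cons eq_sym (negbTE nzy).
case/splitPr: ys' us ps => p1 p2 us ps.
case/negP: (eacyc x (z :: rcons p1 y)); apply/and4P; split.
- by move: us; rewrite -cat_rcons -cat_cons -cat_cons cat_uniq => /andP [].
- by rewrite /= size_rcons.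
- by move: ps; rewrite -cat_rcons -cat_cons cat_path => /andP [].
- by rewrite /= last_rcons eS.
Qed.

(* If v is reached from u through u' while w is reached from u' through u,
   then u lies on P(v,w). *)
Lemma tdist_through s : forall u u' v w, tp u v = u' :: s -> tp u' w = u :: tp u w ->
  td v w = td u v + td u w.
Proof.
elim: s => [|u'' s IH] u u' v w H1 H2.
  have := tpath_last u v; rewrite H1 /= => E; subst v.
  by rewrite /tdist H1 H2 /= add1n.
case: (tpath_cons H1) => euu' H1'; case: (tpath_cons H1') => eu'u'' _.
case: (tpath_adjacent w eu'u'') => H3.
  rewrite H2 in H3; case: H3 => Eu _; subst u''.
  by case/and3P: (tpath_spec u v); rewrite H1 /= !in_cons eqxx !orbT.
rewrite (IH u' u'' v w H1' H3) /tdist H1 H2 H1' /=; lia.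
Qed.

(* The neighbour of u on the path P(u,w) (u itself when w = u). *)
Definition toward u w := head u (tp u w).

Lemma toward_edge u a : e u a -> toward u a = a.
Proof. by move=> H; rewrite /toward tpath_edge. Qed.

Lemma toward_refl u : toward u u = u.
Proof. by rewrite /toward tpath_refl. Qed.

Lemma tpath_toward u w : u != w -> tp u w = toward u w :: tp (toward u w) w.
Proof.
move=> uw; case H: (tp u w) => [|y s]; last by rewrite /toward H; case: (tpath_cons H) => _ ->.
by have := tpath_last u w; rewrite H /= => E; rewrite E eqxx in uw.
Qed.

Lemma toward_adj u w : u != w -> e u (toward u w).
Proof. by move=> uw; case: (tpath_cons (tpath_toward uw)). Qed.

Lemma tdist_gt0 u v : u != v -> 0 < td u v.
Proof. by move=> uv; rewrite /tdist (tpath_toward uv). Qed.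

Lemma tpath_away m a w : e m a -> toward m w != a -> tp a w = m :: tp m w.
Proof. by move=> ema ne; case: (tpath_adjacent w ema) => // H; rewrite /toward H eqxx in ne. Qed.

Lemma toward_back u x w : tp u w = x :: tp x w -> toward x w != u.
Proof.
move=> H; case/and3P: (tpath_spec u w); rewrite H /= => /andP [un _] _ _.
apply: contra un => /eqP <-; rewrite /toward.
by case: (tp x w) => [|y s]; rewrite /= ?mem_head // in_cons mem_head orbT.
Qed.

(* A vertex y reached from z in another direction than m lies in the same
   branch at m as z, beyond z. *)
Lemma toward_transfer m z y a : z != m -> toward m z = a -> y != z ->
  toward z y != toward z m -> toward m y = a /\ td m y = td m z + td z y.
Proof.
move=> zm fa yz ne.
case: (tpath_adjacent y (toward_adj zm)) => H; first by rewrite /toward H eqxx in ne.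
have D := tdist_through (tpath_toward zm) H; rewrite (tdist_sym m z) in D.
split => //; apply/eqP; apply: contraT => na.
have mz : m != z by rewrite eq_sym.
have ema := toward_adj mz; rewrite fa in ema.
have Hm := tpath_toward mz; rewrite fa in Hm.
have := tdist_through Hm (tpath_away ema na); have := tdist_gt0 mz; lia.
Qed.

Lemma tpath_equidistant u v w : u != v -> td u w = td v w ->
  tp u w = toward u v :: tp (toward u v) w.
Proof.
move=> uv D; case: (tpath_adjacent w (toward_adj uv)) => // H.
have := tdist_through (tpath_toward uv) H; have := tdist_gt0 uv; lia.
Qed.

Definition free (W : {set T}) m a := [forall w in W, toward m w != a].

Lemma freeP (W : {set T}) m a : reflect (forall w, w \in W -> toward m w != a) (free W m a).
Proof. exact: forall_inP. Qed.

Lemma equidistant_free_pair (W : {set T}) w0 u v : w0 \in W -> u != v ->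
  (forall w, w \in W -> td u w = td v w) ->
  exists m a b, [/\ e m a, e m b, a != b, free W m a & free W m b].
Proof.
move=> Ww0; move Huv: (td u v) => n; elim/ltn_ind: n u v Huv => n IH u v Huv uv HW.
have vu : v != u by rewrite eq_sym.
(* u and v both step toward each other; the steps u', v' stay equidistant. *)
set u' := toward u v; set v' := toward v u.
have Su x : x \in W -> tp u x = u' :: tp u' x.
  by move=> Hx; apply: tpath_equidistant uv (HW x Hx).
have Sv x : x \in W -> tp v x = v' :: tp v' x.
  by move=> Hx; apply: tpath_equidistant vu (esym (HW x Hx)).
have Du x : x \in W -> td u x = (td u' x).+1 by move=> Hx; rewrite /tdist Su.
have Dv x : x \in W -> td v x = (td v' x).+1 by move=> Hx; rewrite /tdist Sv.
have eu : e u u' := toward_adj uv; have ev : e v v' := toward_adj vu.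
have n1 : n = (td u' v).+1 by rewrite -Huv /tdist (tpath_toward uv).
(* Adjacent vertices have distances of different parity to w0. *)
case: (eqVneq u' v) => [u'v | u'v].
  by have := HW w0 Ww0; rewrite Du // -u'v; lia.
have D' : td u' v' = (td u' v).-1.
  have tvu' : td v u' = td u' v by rewrite tdist_sym.
  case: (tpath_adjacent u' ev) => H; first by rewrite -tvu' tdist_sym /tdist H.
  have := tdist_through (tpath_toward vu) H; rewrite /tdist (tpath_edge eu) /=.
  by rewrite -/(tdist e v u) -/(tdist e v u') tvu' tdist_sym; have := tdist_gt0 u'v; lia.
(* Either u and v are two neighbours of u' = v', or d(u',v') = d(u,v) - 2. *)
case: (eqVneq u' v') => [e' | ne'].
  exists u', u, v; split => //; first (by rewrite eS); first (by rewrite e' eS).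
  - by apply/freeP => w Hw; apply: toward_back (Su w Hw).
  - by apply/freeP => w Hw; rewrite e'; apply: toward_back (Sv w Hw).
apply: (IH (td u' v')) ne' _ => //; first by have := tdist_gt0 u'v; lia.
by move=> w Hw; have := HW w Hw; rewrite Du // Dv //; case.
Qed.

Lemma resolving_of_no_free_pair (W : {set T}) w0 : w0 \in W ->
  (forall m a b, e m a -> e m b -> a != b -> free W m a -> free W m b -> False) ->
  resolving (udist e) W.
Proof.
move=> Ww0 H; apply/forallP => u; apply/forallP => v; apply/implyP => /forall_inP Hd.
apply: contraT => uv.
have HW w : w \in W -> td u w = td v w by move=> Hw; have := Hd w Hw; rewrite eqz_nat => /eqP.
case: (equidistant_free_pair Ww0 uv HW) => m [a [b [ema emb ab fa fb]]].
by case: (H m a b).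
Qed.

Lemma major_of_three m a b c : e m a -> e m b -> e m c -> a != b -> a != c -> b != c ->
  major e m.
Proof.
move=> ema emb emc ab ac bc; rewrite /major /deg (cardsD1 a) (cardsD1 b) (cardsD1 c) !inE.
by rewrite ema emb emc (eq_sym b a) ab (eq_sym c b) bc (eq_sym c a) ac.
Qed.

Lemma two_other_neighbours z p : major e z ->
  exists c1 c2, [/\ e z c1, e z c2, c1 != c2, c1 != p & c2 != p].
Proof.
rewrite /major /deg (cardsD1 p) => H.
have /card_gt0P [c1 Hc1] : 0 < #|[set w | e z w] :\ p| by move: H; case: (p \in _) => /=; lia.
move: H; rewrite (cardsD1 c1) Hc1 => H.
have /card_gt0P [c2] : 0 < #|[set w | e z w] :\ p :\ c1| by move: H; case: (p \in _) => /=; lia.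
rewrite !inE => /and3P [c21 c2p ec2]; move: Hc1; rewrite !inE => /andP [c1p ec1].
by exists c1, c2; split => //; rewrite eq_sym.
Qed.

(* Every branch at z contains a leaf: a vertex of the branch farthest from z. *)
Lemma leaf_in_branch z a : e z a ->
  exists x, [/\ x != z, toward z x = a & forall y, e x y -> y = toward x z].
Proof.
move=> eza; have az : a != z by rewrite eq_sym neq_of_edge.
have Pa : (a != z) && (toward z a == a) by rewrite az toward_edge // eqxx.
case: (@arg_maxnP _ a (fun x => (x != z) && (toward z x == a)) (td z) Pa)
  => x /andP [xz /eqP fx] Hmax.
exists x; split => // y exy; apply/eqP; apply: contraT => ny.
have yx : y != x by rewrite eq_sym neq_of_edge.
have [] := toward_transfer xz fx yx; first by rewrite toward_edge.
move=> fzy D.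
have yz : y != z by apply: (contra_neq _ az) => yz; rewrite -fzy yz toward_refl.
have := Hmax y; rewrite yz fzy eqxx D /tdist (tpath_edge exy) /= => /(_ isT); lia.
Qed.

Definition majorless z a := [forall x, (toward z x == a) ==> ~~ major e x].

(* A major vertex with a branch free of major vertices is exterior major:
   the leaf of that branch is a terminal vertex of it. *)
Lemma exterior_major_of_majorless z a : major e z -> e z a -> majorless z a ->
  exterior_major e z.
Proof.
move=> mz eza /forallP Hmf; rewrite /exterior_major mz /=; apply/existsP.
case: (leaf_in_branch eza) => x [xz fx Hl]; exists x.
rewrite /terminal mz /=; apply/andP; split.
  rewrite /leaf /deg.
  have -> : [set w | e x w] = [set toward x z].
    by apply/setP => y; rewrite !inE; apply/idP/eqP => [/Hl //|->]; apply: toward_adj.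
  by rewrite cards1.
apply/forallP => w; apply/implyP => /andP [mw wz].
have fw : toward z w != a by apply: contraTneq mw => fw; have := Hmf w; rewrite fw eqxx.
have Hz := tpath_toward (_ : z != x); rewrite eq_sym xz fx in Hz.
have := tdist_through (Hz isT) (tpath_away eza fw).
have := tdist_gt0 (_ : z != w); rewrite eq_sym wz => /(_ isT).
rewrite (tdist_sym z x); lia.
Qed.

(* A tree without major vertices is a path, resolved by one of its ends. *)
Lemma no_major_resolving (x0 : T) : (forall y, ~~ major e y) ->
  exists x, resolving (udist e) [set x].
Proof.
move=> nm.
have [x Hx] : exists x, forall y z, e x y -> e x z -> y = z.
  case: (pickP (fun v => v != x0)) => [v vx0 | all_x0].
    case: (leaf_in_branch (toward_adj vx0)) => x [_ _ Hl]; exists x.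
    by move=> y z /Hl -> /Hl ->.
  by exists x0 => y z _ _; move: (all_x0 y) (all_x0 z) => /negbFE/eqP -> /negbFE/eqP ->.
exists x; apply: (@resolving_of_no_free_pair _ x); first by rewrite inE.
move=> m a b ema emb ab /freeP fa /freeP fb.
case: (eqVneq m x) => [mx|mx]; first by subst m; rewrite (Hx a b) ?eqxx in ab.
have := nm m; rewrite (major_of_three ema emb (toward_adj mx) ab) //.
- by rewrite eq_sym; apply: fa; rewrite inE.
- by rewrite eq_sym; apply: fb; rewrite inE.
Qed.

Section Signed.
Variable neg : T -> T -> bool.
Hypothesis nsig : signature e neg.

Lemma path_sign_cons a m s : path_sign neg a (m :: s) = (esign neg a m * path_sign neg m s)%R.
Proof. by rewrite /path_sign /= big_cons. Qed.

Lemma absz_path_sign u s : `|path_sign neg u s|%N = 1.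
Proof.
elim: s u => [|x s IH] u; first by rewrite /path_sign /= big_nil.
by rewrite path_sign_cons abszM IH /esign; case: (neg u x).
Qed.

Lemma absz_sdist u w : `|sdist e neg u w|%N = td u w.
Proof. by rewrite /sdist abszM absz_path_sign absz_nat mul1n. Qed.

Lemma resolving_signed (W : {set T}) : resolving (udist e) W -> resolving (sdist e neg) W.
Proof.
move=> /forallP Wres; apply/forallP => u; apply/forallP => v; apply/implyP => /forall_inP H.
move: (Wres u) => /forallP/(_ v)/implyP; apply; apply/forall_inP => w Hw.
by have /eqP E := H w Hw; rewrite /udist -!absz_sdist E.
Qed.

Lemma sdist_free_same_sign (W : {set T}) m a b : e m a -> e m b -> neg m a = neg m b ->
  free W m a -> free W m b -> forall w, w \in W -> sdist e neg a w = sdist e neg b w.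
Proof.
move=> ema emb nab /freeP fa /freeP fb w Hw.
rewrite /sdist /tdist (tpath_away ema (fa w Hw)) (tpath_away emb (fb w Hw)).
by rewrite !path_sign_cons /esign -(nsig ema) -(nsig emb) nab.
Qed.

Variable W : {set T}.
Hypothesis Wres : resolving (sdist e neg) W.

Lemma free_same_sign_eq m a b : e m a -> e m b -> neg m a = neg m b ->
  free W m a -> free W m b -> a = b.
Proof.
move=> ema emb nab fa fb; apply/eqP.
move: Wres => /forallP/(_ a)/forallP/(_ b)/implyP; apply.
by apply/forall_inP => w Hw; rewrite (sdist_free_same_sign ema emb nab fa fb Hw).
Qed.

(* Two of any three W-free branches at m carry edges of the same sign, so a
   vertex has at most two W-free branches. *)
Lemma at_most_two_free m a b c : e m a -> e m b -> e m c ->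
  free W m a -> free W m b -> free W m c -> [|| a == b, a == c | b == c].
Proof.
move=> ema emb emc fa fb fc.
have : [|| neg m a == neg m b, neg m a == neg m c | neg m b == neg m c].
  by case: (neg m a); case: (neg m b); case: (neg m c).
by case/or3P => /eqP E; rewrite (free_same_sign_eq _ _ E) ?eqxx ?orbT.
Qed.

(* A leg at z: a W-free branch without major vertices.  Two-legged vertices
   are major vertices with two legs; W_ext adds a neighbour on one leg of
   each of them to W. *)
Definition leg z a := [&& e z a, free W z a & majorless z a].
Definition two_legged z := major e z && [exists a, exists b, (a != b) && leg z a && leg z b].
Definition pick_leg z := odflt z [pick a | leg z a].
Definition W_ext := W :|: [set pick_leg z | z in [set z | two_legged z]].

Lemma two_legged_exterior z : two_legged z -> exterior_major e z.
Proof.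
case/andP => mz /existsP [a /existsP [b /andP [/andP [_ /and3P [eza _ ml]] _]]].
exact: exterior_major_of_majorless ml.
Qed.

Lemma card_W_ext : #|W_ext| <= #|W| + ext e.
Proof.
rewrite (leq_trans (leq_card_setU _ _).1) // leq_add2l /ext.
rewrite (leq_trans (leq_imset_card _ _)) // subset_leq_card //.
by apply/subsetP => z; rewrite !inE; apply: two_legged_exterior.
Qed.

Lemma free_W_ext m a : free W_ext m a -> free W m a.
Proof. by move=> /freeP H; apply/freeP => w Hw; apply: H; rewrite inE Hw. Qed.

(* A two-legged vertex z has no two W_ext-free branches: with the leg of
   [pick_leg z], which is not W_ext-free, they would give three W-free
   branches at z. *)
Lemma two_legged_no_free_pair z c1 c2 : two_legged z -> e z c1 -> e z c2 -> c1 != c2 ->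
  free W_ext z c1 -> free W_ext z c2 -> False.
Proof.
move=> zl ec1 ec2 c12 f1 f2.
case/andP: (zl) => _ /existsP [a0 /existsP [b0 /andP [/andP [_ la0] _]]].
have : leg z (pick_leg z) by rewrite /pick_leg; case: pickP => [a -> //|/(_ a0)]; rewrite la0.
case/and3P => ea fa _.
have Wp : pick_leg z \in W_ext by apply/setUP; right; apply: imset_f; rewrite inE.
have /freeP/(_ _ Wp) := f1; have /freeP/(_ _ Wp) := f2; rewrite toward_edge // => p2 p1.
have := at_most_two_free ea ec1 ec2 fa (free_W_ext f1) (free_W_ext f2).
by rewrite (negbTE p1) (negbTE p2) (negbTE c12).
Qed.

(* A W_ext-free branch contains no major vertex: otherwise a major vertex z
   of the branch farthest from m is two-legged with two W_ext-free branches. *)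
Lemma free_W_ext_majorless m a : e m a -> free W_ext m a -> majorless m a.
Proof.
move=> ema /freeP Hf; apply/forallP => y0; apply/implyP => /eqP fy0; apply/negP => my0.
have am : a != m by rewrite eq_sym neq_of_edge.
have y0m : y0 != m by apply: (contra_neq _ am) => y0m; rewrite -fy0 y0m toward_refl.
have P0 : [&& y0 != m, toward m y0 == a & major e y0] by rewrite y0m fy0 eqxx my0.
case: (@arg_maxnP _ y0 (fun y => [&& y != m, toward m y == a & major e y]) (td m) P0)
  => z /and3P [zm /eqP fz mz] Hmax.
case: (two_other_neighbours (toward z m) mz) => c1 [c2 [ec1 ec2 c12 c1p c2p]].
have beyond c : e z c -> c != toward z m -> forall y, toward z y = c ->
    [/\ toward m y = a, td m y = td m z + td z y & y != z].
  move=> ec cp y fy; have yz : y != z by apply: contraTneq ec => yz; rewrite -fy yz toward_refl eirr.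
  have ne : toward z y != toward z m by rewrite fy.
  by case: (toward_transfer zm fz yz ne).
have HfW c y : e z c -> c != toward z m -> toward z y = c -> y \in W_ext -> False.
  by move=> ec cp fy Wy; case: (beyond c ec cp y fy) => A _ _; have := Hf y Wy; rewrite A eqxx.
have free_c c : e z c -> c != toward z m -> free W_ext z c.
  by move=> ec cp; apply/freeP => w Hw; apply/eqP => fw; apply: (HfW c w).
have leg_c c : e z c -> c != toward z m -> leg z c.
  move=> ec cp; rewrite /leg ec (free_W_ext (free_c c ec cp)) /=.
  apply/forallP => x; apply/implyP => /eqP fx; apply/negP => mx.
  case: (beyond c ec cp x fx) => A B C.
  have xm : x != m by apply: (contra_neq _ am) => xm; rewrite -A xm toward_refl.
  have := Hmax x; rewrite xm A eqxx mx B (tdist_sym x z) => /(_ isT).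
  rewrite /geq /= -[leqRHS]addn0 leq_add2l leqn0 => /eqP xz0.
  by have := tdist_gt0 C; rewrite xz0.
have zl : two_legged z.
  by rewrite /two_legged mz; apply/existsP; exists c1; apply/existsP; exists c2; rewrite c12 !leg_c.
exact: (two_legged_no_free_pair zl ec1 ec2 c12 (free_c c1 ec1 c1p) (free_c c2 ec2 c2p)).
Qed.

(* If T has a major vertex, W_ext resolves T: two W_ext-free branches at m
   contain no major vertex, so m is either two-legged or, being on the way
   to a major vertex through a third branch, major anyway. *)
Lemma W_ext_resolving w0 : w0 \in W -> (exists y, major e y) -> resolving (udist e) W_ext.
Proof.
move=> Ww0 [y my]; apply: (@resolving_of_no_free_pair _ w0); first by rewrite inE Ww0.
move=> m a b ema emb ab fa fb.
have mla := free_W_ext_majorless ema fa; have mlb := free_W_ext_majorless emb fb.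
case: (boolP (major e m)) => mm.
  have zl : two_legged m.
    rewrite /two_legged mm; apply/existsP; exists a; apply/existsP; exists b.
    by rewrite ab /leg ema emb mla mlb !free_W_ext.
  exact: (two_legged_no_free_pair zl ema emb ab fa fb).
have my' : m != y by apply: contraNneq mm => ->.
have not_toward c : majorless m c -> toward m y != c.
  by move=> /forallP/(_ y); apply: contraTneq => ->; rewrite eqxx my.
have ac : a != toward m y by rewrite eq_sym not_toward.
have bc : b != toward m y by rewrite eq_sym not_toward.
by rewrite (major_of_three ema emb (toward_adj my') ab ac bc) in mm.
Qed.

Lemma resolving_extension : exists2 W', resolving (udist e) W' & #|W'| <= #|W| + ext e.
Proof.
case: (set_0Vmem W) => [W0 | [w0 Ww0]].
  exists W; last exact: leq_addr.
  apply/forallP => u; apply/forallP => v; apply/implyP => _.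
  move: Wres => /forallP/(_ u)/forallP/(_ v)/implyP; apply.
  by apply/forall_inP => w; rewrite W0 inE.
case: (boolP [exists y, major e y]) => [/existsP Hm | nm].
  by exists W_ext; [apply: W_ext_resolving Ww0 Hm | apply: card_W_ext].
have [x Rx] : exists x, resolving (udist e) [set x].
  by apply: (no_major_resolving w0) => y; apply: contraNN nm => my; apply/existsP; exists y.
exists [set x] => //; rewrite cards1 (leq_trans _ (leq_addr _ _)) //.
by apply/card_gt0P; exists w0.
Qed.

End Signed.
End Tree.

Lemma bigmin_le (I : eqType) (r : seq I) (P : pred I) (F : I -> nat) n j :
  j \in r -> P j -> \big[minn/n]_(i <- r | P i) F i <= F j.
Proof.
elim: r => // x r IH; rewrite in_cons big_cons => /orP [/eqP <-|jr] Pj.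
  by rewrite Pj geq_minl.
case: (P x); last exact: IH.
exact: leq_trans (geq_minr _ _) (IH jr Pj).
Qed.

Section MetricDimension.
Variable T : finType.
Variable d : T -> T -> int.

Lemma mdim_elim (P : nat -> Prop) : P #|T| -> (forall W, resolving d W -> P #|W|) ->
  P (mdim d).
Proof. by move=> PT PW; apply: big_ind => // x y; rewrite /minn; case: ifP. Qed.

Lemma mdim_le (W : {set T}) : resolving d W -> mdim d <= #|W|.
Proof. by move=> Wres; apply: bigmin_le; rewrite ?mem_index_enum. Qed.

Lemma mdim_le_card : mdim d <= #|T|.
Proof. by apply: (@mdim_elim (fun n => n <= #|T|)) => // W _; apply: max_card. Qed.

End MetricDimension.

Theorem theorem4p4 (T : finType) (e : rel T) (neg : T -> T -> bool) :
  is_tree e -> signature e neg ->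
  (mdim (udist e) <= mdim (sdist e neg) + ext e)%N /\
  (mdim (sdist e neg) <= mdim (udist e))%N.
(* Lower bound from [resolving_extension], upper bound from [resolving_signed]. *)
Proof.
move=> [[eS eirr] econn eacyc] nsig; split.
- apply: (@mdim_elim _ _ (fun n => mdim (udist e) <= n + ext e)).
    exact: leq_trans (mdim_le_card _) (leq_addr _ _).
  move=> W Wres; have [W' W'res card_W'] := resolving_extension eS eirr econn eacyc nsig Wres.
  exact: leq_trans (mdim_le W'res) card_W'.
- apply: (@mdim_elim _ _ (fun n => mdim (sdist e neg) <= n)); first exact: mdim_le_card.
  by move=> W Wres; apply/mdim_le/resolving_signed.
Qed.
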